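(* Let $S$ be a monoid and $n\in\mathbb N$. If $A$ is an $n$-absolutely pure $S$-act and $B$ is $n$-built from $A$, then $A$ is a retract of $B$. Likewise, if $A$ is an absolutely pure $S$-act and $B$ is built from $A$, then $A$ is a retract of $B$.
   Context: A (right) $S$-act is a set with an action $(a,s)\mapsto as$ with $a1=a$, $a(st)=(as)t$. Equations over an $S$-act $C$ with variables from $X$ have the forms $xs=yt$, $xs=xt$, $xs=c$; a set of equations is consistent if it has a solution in some $S$-act containing $C$. For a set $\Sigma$ of equations over $C$, let $\kappa_\Sigma$ be the congruence on $C\sqcup F_S(X)$ ($F_S(X)$ the free $S$-act on $X$) generated by the pairs $(xu,yv)$ for $xu=yv\in\Sigma$ and $(xs,c)$ for $xs=c\in\Sigma$, and $C(\Sigma)=(C\sqcup F_S(X))/\kappa_\Sigma$; if $\Sigma$ is consistent, $C$ is identified with its image in $C(\Sigma)$ under $c\mapsto[c]$. $A$ is $n$-absolutely pure if every finite consistent set of equations over $A$ in at most $n$ variables has a solution in $A$, and absolutely pure if this holds for all $n$. $B\supseteq A$ is built (resp. $n$-built) from $A=A_0$ if $B=\bigcup_{0\le i\le\xi}A_i$ for some ordinal $\xi$, where for each $i<\xi$, $A_{i+1}=A_i(\Sigma_i)$ for some finite consistent set $\Sigma_i$ of equations over $A_i$ (resp. in at most $n$ variables), and for limit ordinals $\zeta\le\xi$, $A_\zeta=\bigcup_{i<\zeta}A_i$. $A$ is a retract of $B$ if there is an $S$-morphism $B\to A$ restricting to the identity on $A$. *)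

From Stdlib Require List.
From mathcomp Require Import all_boot.
Set Implicit Arguments.
Unset Strict Implicit.
Unset Printing Implicit Defensive.

Record monoid := Monoid {
  mcar :> Type;
  mmul : mcar -> mcar -> mcar;
  mone : mcar;
  mmulA : forall x y z, mmul x (mmul y z) = mmul (mmul x y) z;
  mmul1l : forall x, mmul mone x = x;
  mmul1r : forall x, mmul x mone = x }.

Record act (S : monoid) := Act {
  acar :> Type;
  actf : acar -> S -> acar;
  act1 : forall a, actf a (mone S) = a;
  actA : forall a s t, actf a (mmul s t) = actf (actf a s) t }.

Arguments actf {S} a0 a s : rename.

Definition is_morph (S : monoid) (A B : act S) (f : A -> B) : Prop :=
  forall a s, f (actf A a s) = actf B (f a) s.

Definition retract_of (S : monoid) (A B : act S) (iota : A -> B) : Prop :=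
  exists r : B -> A, is_morph r /\ forall a, r (iota a) = a.

(* Equations with variables from X and constants from C:
   EqXY x s y t  is  x s = y t   (the form x s = x t is EqXY x s x t),
   EqXC x s c    is  x s = c. *)
Inductive equation (S : monoid) (X C : Type) :=
  | EqXY of X & S & X & S
  | EqXC of X & S & C.

Definition solves (S : monoid) (X C : Type) (D : act S) (e : C -> D)
    (sol : X -> D) (Sigma : seq (equation S X C)) : Prop :=
  forall q, List.In q Sigma ->
    match q with
    | EqXY x s y t => actf D (sol x) s = actf D (sol y) t
    | EqXC x s c => actf D (sol x) s = e c
    end.

Definition consts_in (S : monoid) (X C : Type) (P : C -> Prop)
    (Sigma : seq (equation S X C)) : Prop :=
  forall q, List.In q Sigma ->
    match q with EqXY _ _ _ _ => True | EqXC _ _ c => P c end.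

Definition subact (S : monoid) (B : act S) (P : B -> Prop) : Prop :=
  forall b s, P b -> P (actf B b s).

(* Sigma (with constants in the subact P of B) is consistent over P:
   it has a solution in some S-act D containing P, i.e. there is an
   injective S-morphism e from P into D. *)
Definition consistent_over (S : monoid) (X : Type) (B : act S) (P : B -> Prop)
    (Sigma : seq (equation S X B)) : Prop :=
  exists (D : act S) (e : B -> D),
    (forall b s, P b -> e (actf B b s) = actf D (e b) s) /\
    (forall b b', P b -> P b' -> e b = e b' -> b = b') /\
    exists sol : X -> D, solves e sol Sigma.

Definition consistent (S : monoid) (X : Type) (C : act S)
    (Sigma : seq (equation S X C)) : Prop :=
  consistent_over (fun _ => True) Sigma.

(* "in at most n variables": variables from 'I_m with m <= n *)
Definition n_abs_pure (S : monoid) (A : act S) (n : nat) : Prop :=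
  forall (m : nat) (Sigma : seq (equation S 'I_m A)), m <= n ->
    consistent Sigma -> exists sol : 'I_m -> A, solves id sol Sigma.

Definition abs_pure (S : monoid) (A : act S) : Prop :=
  forall n, n_abs_pure A n.

(* Elements of C |_| F_S(X) are represented in B + X * S (inl c with c in the
   subact P, or inr (x, t) = the element x t of the free act F_S(X)). *)
Definition dact (S : monoid) (X : Type) (B : act S) (u : B + X * S) (s : S)
  : B + X * S :=
  match u with
  | inl c => inl (actf B c s)
  | inr (x, t) => inr (x, mmul t s)
  end.

Definition in_dom (S : monoid) (X : Type) (B : act S) (P : B -> Prop)
    (u : B + X * S) : Prop :=
  match u with inl c => P c | inr _ => True end.

Definition is_congruence (S : monoid) (X : Type) (B : act S)
    (R : B + X * S -> B + X * S -> Prop) : Prop :=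
  (forall u, R u u) /\ (forall u v, R u v -> R v u) /\
  (forall u v w, R u v -> R v w -> R u w) /\
  (forall u v s, R u v -> R (dact u s) (dact v s)).

Definition kappa (S : monoid) (X : Type) (B : act S)
    (Sigma : seq (equation S X B)) (u v : B + X * S) : Prop :=
  forall R, is_congruence R ->
    (forall q, List.In q Sigma ->
       match q with
       | EqXY x s y t => R (inr (x, s)) (inr (y, t))
       | EqXC x s c => R (inr (x, s)) (inl c)
       end) ->
    R u v.

(* Q (a subset of B) is C(Sigma) = (C |_| F_S(X))/kappa_Sigma, with C = P
   identified with its image: there are elements g x of B (images of the
   variables) such that the S-map phi : P |_| F_S(X) -> B,
   c |-> c, x t |-> (g x) t, maps onto Q and has kernel exactly kappa_Sigma. *)
Definition is_C_Sigma (S : monoid) (X : Type) (B : act S) (P Q : B -> Prop)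
    (Sigma : seq (equation S X B)) : Prop :=
  exists g : X -> B,
    let phi := fun u : B + X * S =>
      match u with inl c => c | inr (x, t) => actf B (g x) t end in
    (forall u, in_dom P u -> Q (phi u)) /\
    (forall b, Q b -> exists u, in_dom P u /\ phi u = b) /\
    (forall u v, in_dom P u -> in_dom P v -> (phi u = phi v <-> kappa Sigma u v)).

(* Ordinal chains are indexed by a well-ordered type I (strict order lt)
   with least element bot (= 0) and greatest element top (= xi). *)
Definition well_order (I : Type) (lt : I -> I -> Prop) : Prop :=
  (forall i, ~ lt i i) /\
  (forall i j k, lt i j -> lt j k -> lt i k) /\
  (forall i j, lt i j \/ i = j \/ lt j i) /\
  well_founded lt.

Definition is_succ (I : Type) (lt : I -> I -> Prop) (i j : I) : Prop :=
  lt i j /\ forall k, lt i k -> k = j \/ lt j k.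

Definition is_limit (I : Type) (lt : I -> I -> Prop) (bot z : I) : Prop :=
  z <> bot /\ ~ (exists i, is_succ lt i z).

(* B is built from A (through the inclusion iota) with every step using a
   finite consistent set of equations in m variables with  ok m. *)
Definition built_with (S : monoid) (ok : nat -> Prop) (A B : act S)
    (iota : A -> B) : Prop :=
  is_morph iota /\ injective iota /\
  exists (I : Type) (lt : I -> I -> Prop) (bot top : I) (Ai : I -> B -> Prop),
    well_order lt /\
    (forall i, i = bot \/ lt bot i) /\
    (forall i, i = top \/ lt i top) /\
    (forall i, subact (Ai i)) /\
    (forall b, Ai bot b <-> exists a, b = iota a) /\
    (forall i j, is_succ lt i j ->
       exists (m : nat) (Sigma : seq (equation S 'I_m B)),
         ok m /\ consts_in (Ai i) Sigma /\ consistent_over (Ai i) Sigma /\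
         is_C_Sigma (Ai i) (Ai j) Sigma) /\
    (forall z, is_limit lt bot z ->
       forall b, Ai z b <-> exists i, lt i z /\ Ai i b) /\
    (forall b : B, exists i, Ai i b).

Definition n_built (S : monoid) (n : nat) (A B : act S) (iota : A -> B) : Prop :=
  built_with (fun m => m <= n) iota.

Definition built (S : monoid) (A B : act S) (iota : A -> B) : Prop :=
  built_with (fun _ => True) iota.

From mathcomp Require Import all_boot.
From Stdlib Require Import ClassicalEpsilon ProofIrrelevance FunctionalExtensionality.
Set Implicit Arguments.
Unset Strict Implicit.
Unset Printing Implicit Defensive.

(* A retraction B -> A is built stage by stage along the chain A = A_0 <= ... <= A_xi = B,
   as partial retractions r_i : A_i -> A extending each other.  At a successor stage
   A_{i+1} = A_i(Sigma), replace each constant c of Sigma by r_i c.  The resulting system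
   over A is consistent: collapsing A_i onto A along r_i turns B into an S-act containing A
   in which the generators of A_{i+1} solve it.  Purity gives a solution in A, and since
   A_{i+1} is the quotient of A_i + F_S(X) by kappa_Sigma, r_i together with that solution
   factors through A_{i+1}.  At limit stages the r_j are glued together. *)

Lemma factor_through (U V T : Type) (D : U -> Prop) (phi : U -> V) (f : U -> option T) :
  (forall u v, D u -> D v -> phi u = phi v -> f u = f v) ->
  exists f' : V -> option T, forall u, D u -> f' (phi u) = f u.
Proof.
move=> f_ker.
exists (fun b => match excluded_middle_informative (exists u, D u /\ phi u = b) with
  | left H => f (proj1_sig (constructive_indefinite_description _ H))
  | right _ => None end).
move=> u Du; case: excluded_middle_informative => [H|[]]; last by exists u.
case: constructive_indefinite_description => v [Dv Ev] /=.
exact: f_ker.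
Qed.

Section Kappa.
Variables (S : monoid) (X : Type) (B : act S) (P : B -> Prop).
Hypothesis subP : subact P.

Definition free_eval (g : X -> B) (u : B + X * S) : B :=
  match u with inl c => c | inr (x, t) => actf B (g x) t end.

Lemma free_eval_dact g u s : free_eval g (dact u s) = actf B (free_eval g u) s.
Proof. by case: u => [c|[x t]] //=; rewrite actA. Qed.

Lemma in_dom_dact (u : B + X * S) s : in_dom P u -> in_dom P (dact u s).
Proof. by case: u => [c|[x t]] //; apply: subP. Qed.

Definition respects_eqns (T : Type) (f : B + X * S -> T)
    (Sigma : seq (equation S X B)) : Prop :=
  forall q, List.In q Sigma ->
    match q with
    | EqXY x s y t => f (inr (x, s)) = f (inr (y, t))
    | EqXC x s c => f (inr (x, s)) = f (inl c)
    end.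

Lemma kappa_eqn (Sigma : seq (equation S X B)) q : List.In q Sigma ->
  match q with
  | EqXY x s y t => kappa Sigma (inr (x, s)) (inr (y, t))
  | EqXC x s c => kappa Sigma (inr (x, s)) (inl c)
  end.
Proof. by case: q => [x s y t|x s c] q_in R _ R_gen; apply: (R_gen _ q_in). Qed.

Lemma kappa_sub_kernel (T : Type) (f : B + X * S -> T) (h : T -> S -> T)
    (Sigma : seq (equation S X B)) (u v : B + X * S) :
  (forall u s, in_dom P u -> f (dact u s) = h (f u) s) ->
  consts_in P Sigma -> respects_eqns f Sigma ->
  in_dom P u -> in_dom P v -> kappa Sigma u v -> f u = f v.
Proof.
move=> f_dact Sigma_P f_Sigma Pu Pv kappa_uv.
pose R u v := (in_dom P u /\ in_dom P v /\ f u = f v) \/ u = v.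
suff : R u v by case=> [[_ [_ ->]]|->].
apply: kappa_uv => [|q q_in]; rewrite /R.
- split; first by right.
  split; first by move=> w1 w2 [[? [? e]]|->]; [left|right]; do !split.
  split.
    move=> w1 w2 w3 [[P1 [P2 e1]]|->]; last exact.
    case=> [[_ [P3 e2]]|<-]; left; split=> //; split=> //.
    by rewrite e1.
  move=> w1 w2 s [[P1 [P2 e]]|->]; last by right.
  by left; rewrite !f_dact // e; do !split; apply: in_dom_dact.
- have Pq := Sigma_P q q_in; have fq := f_Sigma q q_in.
  by case: q q_in Pq fq => [x s y t|x s c] /= _ Pc fq; left.
Qed.

Lemma is_C_SigmaP (Q : B -> Prop) (Sigma : seq (equation S X B)) :
  is_C_Sigma P Q Sigma ->
  exists g : X -> B,
    (forall u, in_dom P u -> Q (free_eval g u)) /\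
    (forall b, Q b -> exists u, in_dom P u /\ free_eval g u = b) /\
    (forall u v, in_dom P u -> in_dom P v ->
       (free_eval g u = free_eval g v <-> kappa Sigma u v)).
Proof. by []. Qed.

Lemma C_Sigma_sub (Q : B -> Prop) (Sigma : seq (equation S X B)) b :
  is_C_Sigma P Q Sigma -> P b -> Q b.
Proof. by move=> /is_C_SigmaP [g [gQ _]] Pb; apply: (gQ (inl b)). Qed.

Lemma free_eval_solves (g : X -> B) (Sigma : seq (equation S X B)) :
  consts_in P Sigma ->
  (forall u v, in_dom P u -> in_dom P v -> kappa Sigma u v ->
     free_eval g u = free_eval g v) ->
  solves id g Sigma.
Proof.
move=> Sigma_P g_ker q q_in; have Pq := Sigma_P q q_in.
have kq := kappa_eqn q_in.
by case: q q_in Pq kq => [x s y t|x s c] _ Pc kq; apply: (g_ker _ _ _ _ kq).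
Qed.

End Kappa.

Section PartialRetraction.
Variables (S : monoid) (A B : act S).

Definition equivariant_on (P : B -> Prop) (r : B -> option A) : Prop :=
  forall b s, P b -> r (actf B b s) = omap (actf A ^~ s) (r b).

Definition retraction_on (P : B -> Prop) (r : B -> option A) : Prop :=
  (forall b, P b -> r b <> None) /\ equivariant_on P r.

Lemma retraction_on_retract (iota : A -> B) (r : B -> option A) :
  retraction_on (fun _ => True) r -> (forall a, r (iota a) = Some a) ->
  retract_of iota.
Proof.
move=> [r_def r_equi] r_iota.
have r_some b : {a | r b = Some a}.
  by case E: (r b) => [a|]; [exists a | case: (r_def b)].
exists (fun b => sval (r_some b)); split=> [b s|a].
- case: (r_some _) => a Ea; case: (r_some b) => a' Ea' /=.
  by move: Ea; rewrite r_equi // Ea' => -[].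
- by case: (r_some _) => a' /=; rewrite r_iota => -[].
Qed.

Section Collapse.
Variables (P : B -> Prop) (r : B -> option A).
Hypotheses (subP : subact P) (r_equi : equivariant_on P r).

(* B with P collapsed onto A along r; [inl None] receives the points of P where r is
   undefined. *)
Definition collapse_car := (option A + {b : B | ~ P b})%type.

Definition collapse_of (b : B) : collapse_car :=
  match excluded_middle_informative (P b) with
  | left _ => inl (r b)
  | right nPb => inr (exist _ b nPb)
  end.

Definition collapse_act (d : collapse_car) (s : S) : collapse_car :=
  match d with
  | inl o => inl (omap (actf A ^~ s) o)
  | inr (exist b _) => collapse_of (actf B b s)
  end.

Lemma collapse_of_in b : P b -> collapse_of b = inl (r b).
Proof. by rewrite /collapse_of; case: excluded_middle_informative. Qed.

Lemma collapse_of_out b (nPb : ~ P b) : collapse_of b = inr (exist _ b nPb).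
Proof.
rewrite /collapse_of; case: excluded_middle_informative => // nPb'.
by rewrite (proof_irrelevance _ nPb nPb').
Qed.

Lemma collapse_act1 d : collapse_act d (mone S) = d.
Proof.
case: d => [[a|]|[b nPb]] /=; first by rewrite act1.
- by [].
- by rewrite act1 collapse_of_out.
Qed.

Lemma collapse_of_morph b s :
  collapse_of (actf B b s) = collapse_act (collapse_of b) s.
Proof.
have [Pb|nPb] := excluded_middle_informative (P b).
- by rewrite !collapse_of_in ?r_equi //; apply: subP.
- by rewrite (collapse_of_out nPb).
Qed.

Lemma collapse_actA d s t :
  collapse_act d (mmul s t) = collapse_act (collapse_act d s) t.
Proof.
case: d => [[a|]|[b nPb]] /=; first by rewrite actA.
- by [].
- by rewrite actA collapse_of_morph.
Qed.

Definition collapse : act S := Act collapse_act1 collapse_actA.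

Definition pull_eqn (X : Type) (q : equation S X B) : seq (equation S X A) :=
  match q with
  | EqXY x s y t => [:: EqXY A x s y t]
  | EqXC x s c => if r c is Some a then [:: EqXC x s a] else [::]
  end.

Definition pull (X : Type) (Sigma : seq (equation S X B)) : seq (equation S X A) :=
  List.flat_map (@pull_eqn X) Sigma.

Lemma pull_consistent (X : Type) (Sigma : seq (equation S X B)) (g : X -> B) :
  consts_in P Sigma -> solves id g Sigma -> consistent (pull Sigma).
Proof.
move=> Sigma_P g_sol.
exists collapse, (fun a => inl (Some a)); split=> //; split=> [a a' _ _ [] //|].
exists (fun x => collapse_of (g x)) => q' /List.in_flat_map [q [q_in q'_in]].
have Pq := Sigma_P q q_in; have gq := g_sol q q_in.
case: q q_in Pq gq q'_in => [x s y t|x s c] _ /= Pc gq.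
- by case=> // <-; rewrite -!collapse_of_morph gq.
- case E: (r c) => [a|] // [] // <-.
  by rewrite -collapse_of_morph gq collapse_of_in // E.
Qed.

End Collapse.
End PartialRetraction.

Lemma retraction_on_C_Sigma (S : monoid) (A B : act S) (X : Type) (P Q : B -> Prop)
    (Sigma : seq (equation S X B)) (r : B -> option A) :
  subact P -> retraction_on P r -> consts_in P Sigma -> is_C_Sigma P Q Sigma ->
  (consistent (pull r Sigma) -> exists sol : X -> A, solves id sol (pull r Sigma)) ->
  exists2 r', retraction_on Q r' & forall b, P b -> r' b = r b.
Proof.
move=> subP [r_def r_equi] Sigma_P /is_C_SigmaP [g [gQ [g_onto g_ker]]] pull_sol.
have g_sol : solves id g Sigma.
  by apply: (free_eval_solves Sigma_P) => u v Pu Pv /(g_ker u v Pu Pv).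
have [sol sol_pull] := pull_sol (pull_consistent subP r_equi Sigma_P g_sol).
pose psi u := match u with inl c => r c | inr (x, t) => Some (actf A (sol x) t) end.
have psi_dact u s : in_dom P u -> psi (dact u s) = omap (actf A ^~ s) (psi u).
  by case: u => [c|[x t]] /= Pu; rewrite ?r_equi ?actA.
have psi_Sigma : respects_eqns psi Sigma.
  move=> q q_in; have Pq := Sigma_P q q_in.
  have pull_q q' : List.In q' (pull_eqn r q) -> List.In q' (pull r Sigma).
    by move=> q'_in; apply/List.in_flat_map; exists q.
  case: q q_in Pq pull_q => [x s y t|x s c] _ /= Pc pull_q.
  - by congr Some; apply: (sol_pull (EqXY A x s y t)); apply: pull_q; left.
  - case E: (r c) pull_q => [a|] pull_q; last by case: (r_def c).
    by congr Some; apply: (sol_pull (EqXC x s a)); apply: pull_q; left.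
have [r' r'_psi] : exists r' : B -> option A,
    forall u, in_dom P u -> r' (free_eval g u) = psi u.
  apply: factor_through => u v Pu Pv /(g_ker u v Pu Pv).
  exact: (kappa_sub_kernel subP (h := fun o s => omap (actf A ^~ s) o) psi_dact).
exists r' => [|b Pb]; last exact: (r'_psi (inl b)).
split=> [b|b s] /g_onto [u [Pu <-]].
- by rewrite r'_psi // /psi; case: u Pu => [c /r_def|[x t]].
- by rewrite -free_eval_dact !r'_psi ?psi_dact //; apply: in_dom_dact.
Qed.

Section WellOrder.
Variables (I : Type) (lt : I -> I -> Prop) (bot : I).
Hypotheses (lt_irr : forall i, ~ lt i i)
  (lt_trans : forall i j k, lt i j -> lt j k -> lt i k)
  (lt_total : forall i j, lt i j \/ i = j \/ lt j i)
  (bot_least : forall i, i = bot \/ lt bot i).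

Lemma nlt_bot i : ~ lt i bot.
Proof.
case: (bot_least i) => [->|lt_bi lt_ib]; first exact: lt_irr.
exact: (lt_irr (lt_trans lt_bi lt_ib)).
Qed.

Lemma lt_succ_inv j i k : is_succ lt j i -> lt k i -> k = j \/ lt k j.
Proof.
move=> [lt_ji succ_ji] lt_ki.
have [lt_kj|[eq_kj|lt_jk]] := lt_total k j; [by right|by left|].
case: (succ_ji k lt_jk) => [eq_ki|lt_ik].
- by rewrite eq_ki in lt_ki; case: (lt_irr lt_ki).
- by case: (lt_irr (lt_trans lt_ki lt_ik)).
Qed.

Lemma is_succ_inj j j' i : is_succ lt j i -> is_succ lt j' i -> j = j'.
Proof.
move=> succ_ji [lt_j'i succ_j'i].
have [//|lt_j'j] := lt_succ_inv succ_ji lt_j'i.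
case: succ_ji => lt_ji _; case: (succ_j'i j lt_j'j) => [eq_ji|lt_ij].
- by rewrite eq_ji in lt_ji; case: (lt_irr lt_ji).
- by case: (lt_irr (lt_trans lt_ij lt_ji)).
Qed.

Lemma bot_succ_or_limit i :
  i = bot \/ (exists j, is_succ lt j i) \/ is_limit lt bot i.
Proof.
have [->|ni_bot] := classic (i = bot); first by left.
have [succ_i|nsucc_i] := classic (exists j, is_succ lt j i); first by right; left.
by right; right.
Qed.

End WellOrder.

Section Chain.
Variables (S : monoid) (ok : nat -> Prop) (A B : act S) (iota : A -> B).
Hypotheses (iota_morph : is_morph iota) (iota_inj : injective iota).
Hypothesis pure : forall m (Sigma : seq (equation S 'I_m A)),
  ok m -> consistent Sigma -> exists sol : 'I_m -> A, solves id sol Sigma.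

Variables (I : Type) (lt : I -> I -> Prop) (bot : I) (Ai : I -> B -> Prop).
Hypotheses (lt_irr : forall i, ~ lt i i)
  (lt_trans : forall i j k, lt i j -> lt j k -> lt i k)
  (lt_total : forall i j, lt i j \/ i = j \/ lt j i)
  (lt_wf : well_founded lt)
  (bot_least : forall i, i = bot \/ lt bot i).
Hypotheses (Ai_sub : forall i, subact (Ai i))
  (Ai_bot : forall b, Ai bot b <-> exists a, b = iota a)
  (Ai_succ : forall i j, is_succ lt i j ->
     exists (m : nat) (Sigma : seq (equation S 'I_m B)),
       [/\ ok m, consts_in (Ai i) Sigma & is_C_Sigma (Ai i) (Ai j) Sigma])
  (Ai_limit : forall z, is_limit lt bot z ->
     forall b, Ai z b <-> exists i, lt i z /\ Ai i b).

Lemma Ai_mono i j b : lt j i -> Ai j b -> Ai i b.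
Proof.
elim/(well_founded_induction lt_wf): i j => i IH j lt_ji Aj_b.
have [eq_ib|[[k succ_ki]|lim_i]] := bot_succ_or_limit lt bot i.
- by rewrite eq_ib in lt_ji; case: (nlt_bot lt_irr lt_trans bot_least lt_ji).
- have [m [Sigma [_ _ C_Sigma]]] := Ai_succ succ_ki.
  apply: (C_Sigma_sub C_Sigma).
  have [eq_jk|lt_jk] := lt_succ_inv lt_irr lt_trans lt_total succ_ki lt_ji.
  + by rewrite -eq_jk.
  + exact: (IH k (proj1 succ_ki) j).
- by apply/(Ai_limit lim_i); exists j.
Qed.

Definition iota_inv (b : B) : option A :=
  epsilon (inhabits None) (fun o => exists2 a, o = Some a & iota a = b).

Lemma iota_invK a : iota_inv (iota a) = Some a.
Proof.
rewrite /iota_inv; have [|a' -> /iota_inj -> //] := epsilon_spec (inhabits None)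
  (fun o => exists2 a', o = Some a' & iota a' = iota a).
by exists (Some a); exists a.
Qed.

Definition extension (P Q : B -> Prop) (r : B -> option A) : B -> option A :=
  epsilon (inhabits (fun _ => None))
    (fun r' => retraction_on Q r' /\ forall b, P b -> r' b = r b).

Lemma extensionP P Q r :
  (exists2 r', retraction_on Q r' & forall b, P b -> r' b = r b) ->
  retraction_on Q (extension P Q r) /\ forall b, P b -> extension P Q r b = r b.
Proof.
case=> r' r'Q r'P; apply: (epsilon_spec _
  (fun r' => retraction_on Q r' /\ forall b, P b -> r' b = r b)).
by exists r'.
Qed.

(* At a limit stage a point is evaluated at some earlier stage containing it;
   [coherent_agree] below makes the choice of that stage irrelevant. *)
Definition retraction_step (i : I) (rec : forall j, lt j i -> B -> option A) :
    B -> option A :=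
  if excluded_middle_informative (i = bot) then iota_inv else
  match excluded_middle_informative (exists j, is_succ lt j i) with
  | left succ_i =>
      let (j, succ_ji) := constructive_indefinite_description _ succ_i in
      extension (Ai j) (Ai i) (rec j (proj1 succ_ji))
  | right _ => fun b =>
      match excluded_middle_informative (exists j, lt j i /\ Ai j b) with
      | left b_below =>
          let (j, Hj) := constructive_indefinite_description _ b_below in
          rec j (proj1 Hj) b
      | right _ => None
      end
  end.

Definition chain_retraction : I -> B -> option A :=
  Fix lt_wf (fun _ => B -> option A) retraction_step.

Local Notation rr := chain_retraction.

Lemma chain_retractionE i : rr i = retraction_step (i := i) (fun j _ => rr j).
Proof.
apply: Fix_eq => j f g fg; congr retraction_step.
by apply: functional_extensionality_dep => k; apply: functional_extensionality.
Qed.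

Lemma chain_retraction_bot : rr bot = iota_inv.
Proof. by rewrite chain_retractionE /retraction_step; case: excluded_middle_informative. Qed.

Lemma chain_retraction_succ j i :
  is_succ lt j i -> rr i = extension (Ai j) (Ai i) (rr j).
Proof.
move=> succ_ji; rewrite chain_retractionE /retraction_step.
case: excluded_middle_informative => [eq_ib|ni_bot].
  case: succ_ji => lt_ji _; rewrite eq_ib in lt_ji.
  by case: (nlt_bot lt_irr lt_trans bot_least lt_ji).
case: excluded_middle_informative => [succ_i|[]]; last by exists j.
case: constructive_indefinite_description => j' succ_j'i.
by rewrite (is_succ_inj lt_irr lt_trans lt_total succ_j'i succ_ji).
Qed.

Lemma chain_retraction_limit i j b : is_limit lt bot i -> lt j i -> Ai j b ->
  exists j', [/\ lt j' i, Ai j' b & rr i b = rr j' b].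
Proof.
move=> [ni_bot nsucc_i] lt_ji Aj_b; rewrite chain_retractionE /retraction_step.
case: excluded_middle_informative => // ni_bot'.
case: excluded_middle_informative => // nsucc_i' /=.
case: excluded_middle_informative => [b_below|[]]; last by exists j.
by case: constructive_indefinite_description => j' [lt_j'i Aj'_b]; exists j'.
Qed.

Definition coherent_at (i : I) : Prop :=
  retraction_on (Ai i) (rr i) /\ forall j b, lt j i -> Ai j b -> rr i b = rr j b.

Lemma coherent_bot : coherent_at bot.
Proof.
split; last by move=> j b /(nlt_bot lt_irr lt_trans bot_least).
rewrite chain_retraction_bot; split=> [b|b s] /Ai_bot [a ->].
- by rewrite iota_invK.
- by rewrite -iota_morph !iota_invK.
Qed.

Lemma coherent_succ j i : is_succ lt j i -> coherent_at j -> coherent_at i.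
Proof.
move=> succ_ji [rj_retr rj_below].
have [m [Sigma [ok_m Sigma_j C_Sigma]]] := Ai_succ succ_ji.
have [ri_retr ri_ext] : retraction_on (Ai i) (rr i) /\
    forall b, Ai j b -> rr i b = rr j b.
  rewrite (chain_retraction_succ succ_ji); apply: extensionP.
  exact: (retraction_on_C_Sigma (@Ai_sub j) rj_retr Sigma_j C_Sigma (pure ok_m)).
split=> // k b lt_ki Ak_b.
have [eq_kj|lt_kj] := lt_succ_inv lt_irr lt_trans lt_total succ_ji lt_ki.
  by subst k; apply: ri_ext.
by rewrite ri_ext ?(rj_below k b lt_kj Ak_b) //; apply: Ai_mono lt_kj Ak_b.
Qed.

Lemma coherent_agree j1 j2 b : coherent_at j1 -> coherent_at j2 ->
  Ai j1 b -> Ai j2 b -> rr j1 b = rr j2 b.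
Proof.
move=> [_ below1] [_ below2] A1_b A2_b.
have [lt12|[<-|lt21]] := lt_total j1 j2.
- by rewrite (below2 j1).
- by [].
- by rewrite (below1 j2).
Qed.

Lemma coherent_limit i : is_limit lt bot i ->
  (forall j, lt j i -> coherent_at j) -> coherent_at i.
Proof.
move=> lim_i IH.
have below j b : lt j i -> Ai j b -> rr i b = rr j b.
  move=> lt_ji Aj_b; have [j' [lt_j'i Aj'_b ->]] := chain_retraction_limit lim_i lt_ji Aj_b.
  exact: coherent_agree (IH j' lt_j'i) (IH j lt_ji) Aj'_b Aj_b.
split=> //; split=> [b|b s] /(Ai_limit lim_i) [j [lt_ji Aj_b]];
  have [[rj_def rj_equi] _] := IH j lt_ji.
- by rewrite (below j) //; apply: rj_def.
- by rewrite (below j) ?(below j b) ?rj_equi //; apply: Ai_sub.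
Qed.

Lemma coherent_all i : coherent_at i.
Proof.
elim/(well_founded_induction lt_wf): i => i IH.
have [->|[[j succ_ji]|lim_i]] := bot_succ_or_limit lt bot i.
- exact: coherent_bot.
- exact: coherent_succ succ_ji (IH j (proj1 succ_ji)).
- exact: coherent_limit.
Qed.

Lemma chain_retract (top : I) : (forall i, i = top \/ lt i top) ->
  (forall b, exists i, Ai i b) -> retract_of iota.
Proof.
move=> top_greatest Ai_cover.
have [[rtop_def rtop_equi] rtop_below] := coherent_all top.
have Atop b : Ai top b.
  have [i Ai_b] := Ai_cover b.
  by case: (top_greatest i) => [<-//|lt_itop]; apply: Ai_mono lt_itop Ai_b.
apply: (retraction_on_retract (r := rr top)) => [|a].
  by split=> [b _|b s _]; [apply: rtop_def|apply: rtop_equi].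
have Abot_a : Ai bot (iota a) by apply/Ai_bot; exists a.
case: (bot_least top) => [->|lt_btop]; last rewrite (rtop_below bot _ lt_btop Abot_a);
  by rewrite chain_retraction_bot iota_invK.
Qed.

End Chain.

Lemma built_with_retract (S : monoid) (ok : nat -> Prop) (A B : act S) (iota : A -> B) :
  (forall m (Sigma : seq (equation S 'I_m A)), ok m -> consistent Sigma ->
     exists sol : 'I_m -> A, solves id sol Sigma) ->
  built_with ok iota -> retract_of iota.
Proof.
move=> pure [iota_morph [iota_inj [I [lt [bot [top [Ai [[lt_irr [lt_trans [lt_total lt_wf]]]
  [bot_least [top_greatest [Ai_sub [Ai_bot [Ai_succ [Ai_limit Ai_cover]]]]]]]]]]]]]].
have {}Ai_succ i j : is_succ lt i j ->
    exists (m : nat) (Sigma : seq (equation S 'I_m B)),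
      [/\ ok m, consts_in (Ai i) Sigma & is_C_Sigma (Ai i) (Ai j) Sigma].
  by move=> /Ai_succ [m [Sigma [ok_m [Sigma_i [_ C_Sigma]]]]]; exists m, Sigma.
exact: (chain_retract iota_morph iota_inj pure lt_irr lt_trans lt_total lt_wf
  bot_least Ai_sub Ai_bot Ai_succ Ai_limit top_greatest Ai_cover).
Qed.

Theorem mainTheorem14 (S : monoid) (n : nat) (A B : act S) (iota : A -> B) :
  (n_abs_pure A n -> n_built n iota -> retract_of iota) /\
  (abs_pure A -> built iota -> retract_of iota).
Proof.
split=> [pure|pure]; apply: built_with_retract => m Sigma ok_m.
- exact: (pure m Sigma ok_m).
- exact: (pure m m Sigma (leqnn m)).
Qed.
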